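(* Let $G$ be an open localic groupoid, $X$ a principal $G$-bundle over a locale $M$ with bundle map $\pi:X\to M$, and $f:\tilde M\to M$ a map of locales. Then there exist a principal $G$-bundle $\tilde X$ over $\tilde M$ with bundle map $\tilde\pi:\tilde X\to\tilde M$ and an equivariant map $\tilde f:\tilde X\to X$ such that $\pi\circ\tilde f=f\circ\tilde\pi$. Moreover, for any principal $G$-bundle $X'$ over $\tilde M$ and any equivariant map $f':X'\to X$ (compatible with the bundle maps over $f$), there is a unique isomorphism of principal $G$-bundles $\varphi:X'\to\tilde X$ with $\tilde f\circ\varphi=f'$.
   Context: An open localic groupoid $G$ has locales $G_0,G_1$ with domain, range, unit, inverse, multiplication maps, $d$ open. A left $G$-locale is a locale $X$ with anchor $p:X\to G_0$ and associative unital action $a:G_1\times_{G_0}X\to X$ (pullback along $d$ and $p$) with $p\circ a=r\circ\pi_1$. An equivariant map between $G$-locales is a map commuting with anchors and actions. A principal $G$-bundle over a locale $M$ is a $G$-locale with a map $\pi:X\to M$ such that $\pi\circ a=\pi\circ\pi_2$, the pairing map $\langle a,\pi_2\rangle:G_1\times_{G_0}X\to X\times_MX$ is an isomorphism of locales, and $\pi$ is an open surjection. *)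

(* Locales are represented by their frames of opens;
   a locale map X -> Y is a frame homomorphism O(Y) -> O(X). *)
From Stdlib Require Import Setoid.
Set Implicit Arguments.
Unset Strict Implicit.

Record Frame := {
  fcar :> Type;
  fle : fcar -> fcar -> Prop;
  fmeet : fcar -> fcar -> fcar;
  ftop : fcar;
  fsup : (fcar -> Prop) -> fcar;
  fle_refl : forall a, fle a a;
  fle_trans : forall a b c, fle a b -> fle b c -> fle a c;
  fle_antisym : forall a b, fle a b -> fle b a -> a = b;
  fmeet_glb : forall a b c, fle c (fmeet a b) <-> (fle c a /\ fle c b);
  ftop_max : forall a, fle a ftop;
  fsup_lub : forall (S : fcar -> Prop) c, fle (fsup S) c <-> (forall s, S s -> fle s c);
  fdistr : forall a (S : fcar -> Prop),
      fmeet a (fsup S) = fsup (fun y => exists s, S s /\ y = fmeet a s)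
}.

Arguments fle {f}.
Arguments fmeet {f}.
Arguments ftop {f}.
Arguments fsup {f}.

Lemma fsup_ub (F : Frame) (S : F -> Prop) s : S s -> fle s (fsup S).
Proof. intro Hs. apply (proj1 (fsup_lub S (fsup S)) (fle_refl _)); exact Hs. Qed.

Lemma fsup_ext (F : Frame) (S T : F -> Prop) :
  (forall x, S x <-> T x) -> fsup S = fsup T.
Proof.
  intro H. apply fle_antisym; apply fsup_lub; intros s Hs;
  apply fsup_ub; apply H; exact Hs.
Qed.

Record LMap (X Y : Frame) := {
  lm :> Y -> X;
  lm_top : lm ftop = ftop;
  lm_meet : forall a b, lm (fmeet a b) = fmeet (lm a) (lm b);
  lm_sup : forall S : Y -> Prop,
      lm (fsup S) = fsup (fun x => exists y, S y /\ x = lm y)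
}.

Definition lid (X : Frame) : LMap X X.
Proof.
  refine {| lm := fun x => x |}; try reflexivity.
  intro S. apply fsup_ext. intro x; split.
  - intro H; exists x; split; [exact H | reflexivity].
  - intros [y [Hy ->]]; exact Hy.
Defined.

Definition lcomp (X Y Z : Frame) (g : LMap Y Z) (f : LMap X Y) : LMap X Z.
Proof.
  refine {| lm := fun z => f (g z) |}.
  - rewrite !lm_top; reflexivity.
  - intros a b; rewrite !lm_meet; reflexivity.
  - intro S. rewrite lm_sup, lm_sup. apply fsup_ext. intro x; split.
    + intros [y [[z [Hz ->]] ->]]. exists z; split; [exact Hz | reflexivity].
    + intros [z [Hz ->]]. exists (g z); split; [exists z; split; [exact Hz|reflexivity] | reflexivity].
Defined.

Definition lmap_eq (X Y : Frame) (f g : LMap X Y) : Prop := forall y, f y = g y.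

Definition is_iso (X Y : Frame) (f : LMap X Y) : Prop :=
  exists g : LMap Y X, lmap_eq (lcomp g f) (lid X) /\ lmap_eq (lcomp f g) (lid Y).

(* open map (Joyal--Tierney): f^* has a left adjoint f_! satisfying Frobenius *)
Definition is_open (X Y : Frame) (f : LMap X Y) : Prop :=
  exists fs : X -> Y,
    (forall a b, fle (fs a) b <-> fle a (f b)) /\
    (forall a b, fs (fmeet a (f b)) = fmeet (fs a) b).

Definition is_surj (X Y : Frame) (f : LMap X Y) : Prop :=
  forall a b, f a = f b -> a = b.

Definition is_open_surj (X Y : Frame) (f : LMap X Y) : Prop :=
  is_open f /\ is_surj f.

Definition is_pullback (X Y Z P : Frame) (f : LMap X Z) (g : LMap Y Z)
    (p1 : LMap P X) (p2 : LMap P Y) : Prop :=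
  lmap_eq (lcomp f p1) (lcomp g p2) /\
  forall (W : Frame) (a : LMap W X) (b : LMap W Y),
    lmap_eq (lcomp f a) (lcomp g b) ->
    (exists h : LMap W P, lmap_eq (lcomp p1 h) a /\ lmap_eq (lcomp p2 h) b) /\
    (forall h h' : LMap W P, lmap_eq (lcomp p1 h) (lcomp p1 h') ->
        lmap_eq (lcomp p2 h) (lcomp p2 h') -> lmap_eq h h').

(* G2 = G1 x_{G0} G1 is the pullback of d (first factor) and r (second
   factor): composable pairs (g,h) with d g = r h; gmul (g,h) = g h.
   The axioms are stated with generalized elements W -> G1. *)
Record OpenGroupoid := {
  G0 : Frame;
  G1 : Frame;
  gd : LMap G1 G0;
  gr : LMap G1 G0;
  gu : LMap G0 G1;
  ginv : LMap G1 G1;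
  G2 : Frame;
  gp1 : LMap G2 G1;
  gp2 : LMap G2 G1;
  G2_pb : is_pullback gd gr gp1 gp2;
  gmul : LMap G2 G1;
  gd_u : lmap_eq (lcomp gd gu) (lid G0);
  gr_u : lmap_eq (lcomp gr gu) (lid G0);
  gd_mul : lmap_eq (lcomp gd gmul) (lcomp gd gp2);
  gr_mul : lmap_eq (lcomp gr gmul) (lcomp gr gp1);
  gd_inv : lmap_eq (lcomp gd ginv) gr;
  gr_inv : lmap_eq (lcomp gr ginv) gd;
  gmul_unit_l : forall (W : Frame) (a : LMap W G1) (h : LMap W G2),
      lmap_eq (lcomp gp1 h) (lcomp gu (lcomp gr a)) ->
      lmap_eq (lcomp gp2 h) a -> lmap_eq (lcomp gmul h) a;
  gmul_unit_r : forall (W : Frame) (a : LMap W G1) (h : LMap W G2),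
      lmap_eq (lcomp gp1 h) a ->
      lmap_eq (lcomp gp2 h) (lcomp gu (lcomp gd a)) -> lmap_eq (lcomp gmul h) a;
  gmul_inv_l : forall (W : Frame) (a : LMap W G1) (h : LMap W G2),
      lmap_eq (lcomp gp1 h) (lcomp ginv a) -> lmap_eq (lcomp gp2 h) a ->
      lmap_eq (lcomp gmul h) (lcomp gu (lcomp gd a));
  gmul_inv_r : forall (W : Frame) (a : LMap W G1) (h : LMap W G2),
      lmap_eq (lcomp gp1 h) a -> lmap_eq (lcomp gp2 h) (lcomp ginv a) ->
      lmap_eq (lcomp gmul h) (lcomp gu (lcomp gr a));
  gmul_assoc : forall (W : Frame) (a b c : LMap W G1) (h1 h2 h3 h4 : LMap W G2),
      lmap_eq (lcomp gp1 h1) a -> lmap_eq (lcomp gp2 h1) b ->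
      lmap_eq (lcomp gp1 h2) (lcomp gmul h1) -> lmap_eq (lcomp gp2 h2) c ->
      lmap_eq (lcomp gp1 h3) b -> lmap_eq (lcomp gp2 h3) c ->
      lmap_eq (lcomp gp1 h4) a -> lmap_eq (lcomp gp2 h4) (lcomp gmul h3) ->
      lmap_eq (lcomp gmul h2) (lcomp gmul h4);
  gd_open : is_open gd
}.

Record GLocale (G : OpenGroupoid) := {
  gl_sp : Frame;
  anchor : LMap gl_sp (G0 G);
  adom : Frame;
  ap1 : LMap adom (G1 G);
  ap2 : LMap adom gl_sp;
  adom_pb : is_pullback (gd G) anchor ap1 ap2;
  act : LMap adom gl_sp;
  anchor_act : lmap_eq (lcomp anchor act) (lcomp (gr G) ap1);
  act_unit : forall (W : Frame) (x : LMap W gl_sp) (h : LMap W adom),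
      lmap_eq (lcomp ap1 h) (lcomp (gu G) (lcomp anchor x)) ->
      lmap_eq (lcomp ap2 h) x -> lmap_eq (lcomp act h) x;
  act_assoc : forall (W : Frame) (g k : LMap W (G1 G)) (x : LMap W gl_sp)
      (h1 h2 : LMap W adom) (h3 : LMap W (G2 G)) (h4 : LMap W adom),
      lmap_eq (lcomp ap1 h1) k -> lmap_eq (lcomp ap2 h1) x ->
      lmap_eq (lcomp ap1 h2) g -> lmap_eq (lcomp ap2 h2) (lcomp act h1) ->
      lmap_eq (lcomp (gp1 G) h3) g -> lmap_eq (lcomp (gp2 G) h3) k ->
      lmap_eq (lcomp ap1 h4) (lcomp (gmul G) h3) -> lmap_eq (lcomp ap2 h4) x ->
      lmap_eq (lcomp act h2) (lcomp act h4)
}.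

(* equivariant maps: commute with anchors and actions
   (phi o a_X = a_Y o (id x phi)) *)
Definition equivariant (G : OpenGroupoid) (X Y : GLocale G)
    (phi : LMap (gl_sp X) (gl_sp Y)) : Prop :=
  lmap_eq (lcomp (anchor Y) phi) (anchor X) /\
  forall k : LMap (adom X) (adom Y),
    lmap_eq (lcomp (ap1 Y) k) (ap1 X) ->
    lmap_eq (lcomp (ap2 Y) k) (lcomp phi (ap2 X)) ->
    lmap_eq (lcomp phi (act X)) (lcomp (act Y) k).

Record PrincipalBundle (G : OpenGroupoid) (M : Frame) := {
  pb_loc : GLocale G;
  pb_proj : LMap (gl_sp pb_loc) M;
  pb_inv : lmap_eq (lcomp pb_proj (act pb_loc)) (lcomp pb_proj (ap2 pb_loc));
  (* the pairing map <a, pi_2> : G1 x_{G0} X -> X x_M X is an isomorphism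
     (for any choice of the pullback X x_M X) *)
  pb_pair_iso : forall (P : Frame) (q1 q2 : LMap P (gl_sp pb_loc)),
      is_pullback pb_proj pb_proj q1 q2 ->
      exists c : LMap (adom pb_loc) P,
        lmap_eq (lcomp q1 c) (act pb_loc) /\ lmap_eq (lcomp q2 c) (ap2 pb_loc) /\
        is_iso c;
  pb_open_surj : is_open_surj pb_proj
}.

Definition pb_sp (G : OpenGroupoid) (M : Frame) (X : PrincipalBundle G M) : Frame :=
  gl_sp (pb_loc X).

From Stdlib Require Import FunctionalExtensionality PropExtensionality ProofIrrelevance.

(* The bundle [Xt] is the pullback [Mt x_M X] with the action [g . (m, x) = (m, g . x)].
   It is principal because open surjections are stable under pullback and the pairing
   map of [X] pulls back to that of [Xt]; the universal property of the pullback gives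
   the comparison map [phi : X' -> Xt].  That [phi] is an isomorphism is an instance of
   a general fact: an equivariant map [phi : Y -> Z] of principal bundles over the same
   base is invertible, its inverse sending [z] to [g . y] where [g] is the unique arrow
   with [g . phi y = z].  By uniqueness of such arrows [g . y] does not depend on the
   choice of [y] in the fibre, so it descends along the open surjection
   [Z x_N Y -> Z]. *)

(** * Frames *)

Section FrameLemmas.
Context {F : Frame}.
Implicit Types a b c : F.

Lemma fmeet_lb_l a b : fle (fmeet a b) a.
Proof. apply (proj1 (fmeet_glb a b (fmeet a b)) (fle_refl _)). Qed.

Lemma fmeet_lb_r a b : fle (fmeet a b) b.
Proof. apply (proj1 (fmeet_glb a b (fmeet a b)) (fle_refl _)). Qed.

Lemma fmeet_greatest a b c : fle c a -> fle c b -> fle c (fmeet a b).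
Proof. intros; apply fmeet_glb; split; assumption. Qed.

Lemma fmeet_comm a b : fmeet a b = fmeet b a.
Proof.
  apply fle_antisym; apply fmeet_greatest; (apply fmeet_lb_l || apply fmeet_lb_r).
Qed.

Lemma fmeet_assoc a b c : fmeet (fmeet a b) c = fmeet a (fmeet b c).
Proof.
  apply fle_antisym; repeat apply fmeet_greatest.
  - eapply fle_trans; [apply fmeet_lb_l | apply fmeet_lb_l].
  - eapply fle_trans; [apply fmeet_lb_l | apply fmeet_lb_r].
  - apply fmeet_lb_r.
  - apply fmeet_lb_l.
  - eapply fle_trans; [apply fmeet_lb_r | apply fmeet_lb_l].
  - eapply fle_trans; [apply fmeet_lb_r | apply fmeet_lb_r].
Qed.

Lemma fmeet_right_comm a b c : fmeet (fmeet a b) c = fmeet (fmeet a c) b.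
Proof. rewrite !fmeet_assoc, (fmeet_comm b c); reflexivity. Qed.

Lemma fmeet_idPl a b : fle a b -> fmeet a b = a.
Proof.
  intro H. apply fle_antisym; [apply fmeet_lb_l | apply fmeet_greatest; [apply fle_refl | exact H]].
Qed.

Lemma fmeet_top_r a : fmeet a ftop = a.
Proof. apply fmeet_idPl, ftop_max. Qed.

Lemma fmeet_top_l a : fmeet ftop a = a.
Proof. rewrite fmeet_comm; apply fmeet_top_r. Qed.

Lemma fmeet_idem a : fmeet a a = a.
Proof. apply fmeet_idPl, fle_refl. Qed.

Lemma fmeet_mono a b c d : fle a c -> fle b d -> fle (fmeet a b) (fmeet c d).
Proof.
  intros H1 H2; apply fmeet_greatest.
  - eapply fle_trans; [apply fmeet_lb_l | exact H1].
  - eapply fle_trans; [apply fmeet_lb_r | exact H2].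
Qed.

Lemma fsup_least (S : F -> Prop) c : (forall s, S s -> fle s c) -> fle (fsup S) c.
Proof. apply fsup_lub. Qed.

Lemma fsup_mono (S T : F -> Prop) : (forall x, S x -> T x) -> fle (fsup S) (fsup T).
Proof. intro H; apply fsup_least; intros; apply fsup_ub; auto. Qed.

Lemma fdistr_r a (S : F -> Prop) :
  fmeet (fsup S) a = fsup (fun y => exists s, S s /\ y = fmeet s a).
Proof.
  rewrite fmeet_comm, fdistr. apply fsup_ext; intro x; split;
    intros [s [Hs ->]]; exists s; split; auto using fmeet_comm.
Qed.

Lemma fmeet_fsup_le a (S : F -> Prop) c :
  (forall s, S s -> fle (fmeet a s) c) -> fle (fmeet a (fsup S)) c.
Proof. intro H; rewrite fdistr; apply fsup_least; intros y [s [Hs ->]]; auto. Qed.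

Lemma fsup_fmeet_le a (S : F -> Prop) c :
  (forall s, S s -> fle (fmeet s a) c) -> fle (fmeet (fsup S) a) c.
Proof. intro H; rewrite fdistr_r; apply fsup_least; intros y [s [Hs ->]]; auto. Qed.

End FrameLemmas.

Lemma lm_mono (X Y : Frame) (f : LMap X Y) (a b : Y) : fle a b -> fle (f a) (f b).
Proof.
  intro H. rewrite <- (fmeet_idPl _ _ H), lm_meet. apply fmeet_lb_r.
Qed.

Ltac pointwise_in H := unfold lmap_eq in H; simpl in H.
Ltac pointwise := let y := fresh "y" in intro y; simpl.

Section PullbackLift.
Context {X Y Z P : Frame} {f : LMap X Z} {g : LMap Y Z} {p1 : LMap P X} {p2 : LMap P Y}.
Hypothesis HP : is_pullback f g p1 p2.

Lemma pullback_square : forall z, p1 (f z) = p2 (g z).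
Proof. exact (proj1 HP). Qed.

Lemma pullback_lift {W : Frame} (a : LMap W X) (b : LMap W Y) :
  lmap_eq (lcomp f a) (lcomp g b) ->
  exists h : LMap W P, lmap_eq (lcomp p1 h) a /\ lmap_eq (lcomp p2 h) b.
Proof. intro Hab. exact (proj1 (proj2 HP W a b Hab)). Qed.

Lemma pullback_lift_unique {W : Frame} (h h' : LMap W P) :
  lmap_eq (lcomp p1 h) (lcomp p1 h') -> lmap_eq (lcomp p2 h) (lcomp p2 h') -> lmap_eq h h'.
Proof.
  intros H1 H2.
  assert (Hsq : lmap_eq (lcomp f (lcomp p1 h')) (lcomp g (lcomp p2 h'))).
  { pointwise. rewrite pullback_square. reflexivity. }
  exact (proj2 (proj2 HP W _ _ Hsq) h h' H1 H2).
Qed.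
End PullbackLift.

(** * Pullbacks of locales *)

Section PullbackFrame.
Context {A B C : Frame} (g : LMap A C) (q : LMap B C).

Local Notation AB := (fcar A * fcar B)%type.

(* The opens of the pullback are the downsets of A x B closed under joins in
   each variable and under moving [g c] and [q c] from one factor to the other,
   i.e. the ideals presenting the frame coproduct of A and B over C. *)
Record saturated (D : AB -> Prop) : Prop := {
  sat_down : forall x y x' y', D (x, y) -> fle x' x -> fle y' y -> D (x', y');
  sat_join_l : forall (S : A -> Prop) y, (forall x, S x -> D (x, y)) -> D (fsup S, y);
  sat_join_r : forall x (S : B -> Prop), (forall y, S y -> D (x, y)) -> D (x, fsup S);
  sat_shift_r : forall x y c, D (fmeet x (g c), y) -> D (x, fmeet y (q c));
  sat_shift_l : forall x y c, D (x, fmeet y (q c)) -> D (fmeet x (g c), y)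
}.
Arguments sat_down {D}. Arguments sat_join_l {D}. Arguments sat_join_r {D}.
Arguments sat_shift_r {D}. Arguments sat_shift_l {D}.

Definition saturation (S : AB -> Prop) : AB -> Prop :=
  fun z => forall D, saturated D -> (forall w, S w -> D w) -> D z.

Lemma saturation_saturated S : saturated (saturation S).
Proof.
  constructor.
  - intros x y x' y' H Hx Hy D HD HS. apply (sat_down HD x y); auto. apply H; auto.
  - intros Sx y H D HD HS. apply sat_join_l; auto. intros x Hx; apply H; auto.
  - intros x Sy H D HD HS. apply sat_join_r; auto. intros y Hy; apply H; auto.
  - intros x y c H D HD HS. apply sat_shift_r; auto. apply H; auto.
  - intros x y c H D HD HS. apply sat_shift_l; auto. apply H; auto.
Qed.

Lemma saturation_incl (S : AB -> Prop) w : S w -> saturation S w.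
Proof. intros H D _ HS; auto. Qed.

Lemma saturation_least (S D : AB -> Prop) :
  saturated D -> (forall w, S w -> D w) -> forall w, saturation S w -> D w.
Proof. intros HD HS w H; apply H; auto. Qed.

Lemma saturation_mono (S T : AB -> Prop) :
  (forall z, S z -> T z) -> forall z, saturation S z -> saturation T z.
Proof.
  intros H; apply saturation_least; [apply saturation_saturated |].
  intros; apply saturation_incl; auto.
Qed.

Lemma saturated_and D E : saturated D -> saturated E -> saturated (fun z => D z /\ E z).
Proof.
  intros HD HE; constructor.
  - intros x y x' y' [H1 H2] Hx Hy; split; eapply sat_down; eauto.
  - intros S y H; split; apply sat_join_l; auto; intros x Hx; apply H; auto.
  - intros x S H; split; apply sat_join_r; auto; intros y Hy; apply H; auto.
  - intros x y c [H1 H2]; split; apply sat_shift_r; auto.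
  - intros x y c [H1 H2]; split; apply sat_shift_l; auto.
Qed.

Lemma saturated_true : saturated (fun _ => True).
Proof. constructor; auto. Qed.

Definition down_closed (U : AB -> Prop) :=
  forall x y x' y', U (x, y) -> fle x' x -> fle y' y -> U (x', y').

Lemma saturated_down_closed D : saturated D -> down_closed D.
Proof. intros HD x y x' y' H1 H2 H3; eapply sat_down; eauto. Qed.

Definition pair_meet (z w : AB) : AB := (fmeet (fst z) (fst w), fmeet (snd z) (snd w)).

Lemma pair_meet_idem z : pair_meet z z = z.
Proof. destruct z as [x y]; unfold pair_meet; simpl; rewrite !fmeet_idem; reflexivity. Qed.

Lemma pair_meet_comm z w : pair_meet z w = pair_meet w z.
Proof.
  destruct z as [x y], w as [x' y']; unfold pair_meet; simpl.
  rewrite (fmeet_comm x), (fmeet_comm y); reflexivity.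
Qed.

(* The set of [s] whose meets with all of [U] lie in [saturation V] is saturated. *)
Lemma saturation_meet_l (S U V : AB -> Prop) : down_closed U ->
  (forall s t, S s -> U t -> saturation V (pair_meet s t)) ->
  forall s t, saturation S s -> U t -> saturation V (pair_meet s t).
Proof.
  intros HU H s t Hs Ht.
  set (F := fun w => forall t, U t -> saturation V (pair_meet w t)).
  assert (HF : saturated F).
  { pose proof (saturation_saturated V) as HV. constructor; unfold F, pair_meet; simpl.
    - intros x y x' y' Hw Hx Hy [t1 t2] Ht'. specialize (Hw _ Ht').
      eapply sat_down; [exact HV | exact Hw | |]; apply fmeet_mono; auto using fle_refl.
    - intros Sx y Hw [t1 t2] Ht'. rewrite fdistr_r.
      apply sat_join_l; auto. intros x [s' [Hs' ->]]. apply (Hw s' Hs' (t1, t2) Ht').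
    - intros x Sy Hw [t1 t2] Ht'. rewrite fdistr_r.
      apply sat_join_r; auto. intros y [s' [Hs' ->]]. apply (Hw s' Hs' (t1, t2) Ht').
    - intros x y c Hw [t1 t2] Ht'. specialize (Hw _ Ht'). simpl in Hw.
      rewrite fmeet_right_comm. apply sat_shift_r; auto. rewrite fmeet_right_comm; auto.
    - intros x y c Hw [t1 t2] Ht'. specialize (Hw _ Ht'). simpl in Hw.
      rewrite fmeet_right_comm. apply sat_shift_l; auto. rewrite fmeet_right_comm; auto. }
  exact (saturation_least S F HF (fun w Hw t Ht => H w t Hw Ht) s Hs t Ht).
Qed.

Lemma saturation_meet (S T V : AB -> Prop) : down_closed T ->
  (forall s t, S s -> T t -> saturation V (pair_meet s t)) ->
  forall s t, saturation S s -> saturation T t -> saturation V (pair_meet s t).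
Proof.
  intros HT H s t Hs Ht.
  assert (HS : forall s t, saturation S s -> T t -> saturation V (pair_meet s t))
    by (apply saturation_meet_l; auto).
  rewrite pair_meet_comm. apply (saturation_meet_l T (saturation S) V); auto.
  - apply saturated_down_closed, saturation_saturated.
  - intros; rewrite pair_meet_comm; auto.
Qed.

Definition sat_ideal := { D : AB -> Prop | saturated D }.

Lemma sat_ideal_ext (D E : sat_ideal) :
  (forall z, proj1_sig D z <-> proj1_sig E z) -> D = E.
Proof.
  destruct D as [D HD], E as [E HE]; simpl; intro H.
  assert (D = E) by (apply functional_extensionality; intro z;
                     apply propositional_extensionality; auto).
  subst; f_equal; apply proof_irrelevance.
Qed.

Definition si_le (D E : sat_ideal) : Prop := forall z, proj1_sig D z -> proj1_sig E z.
Definition si_meet (D E : sat_ideal) : sat_ideal :=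
  exist _ (fun z => proj1_sig D z /\ proj1_sig E z)
    (saturated_and _ _ (proj2_sig D) (proj2_sig E)).
Definition si_top : sat_ideal := exist _ (fun _ => True) saturated_true.
Definition si_union (S : sat_ideal -> Prop) : AB -> Prop :=
  fun z => exists D, S D /\ proj1_sig D z.
Definition si_sup (S : sat_ideal -> Prop) : sat_ideal :=
  exist _ (saturation (si_union S)) (saturation_saturated _).

Lemma si_sup_lub (S : sat_ideal -> Prop) c :
  si_le (si_sup S) c <-> (forall s, S s -> si_le s c).
Proof.
  split.
  - intros H s Hs z Hz; apply H, saturation_incl; exists s; auto.
  - intros H z Hz. apply (saturation_least (si_union S) _ (proj2_sig c)) with (w := z); auto.
    intros w [D [HD Hw]]. apply (H D HD); auto.
Qed.

Lemma si_distr a (S : sat_ideal -> Prop) :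
  si_meet a (si_sup S) = si_sup (fun y => exists s, S s /\ y = si_meet a s).
Proof.
  apply sat_ideal_ext; intro z; simpl; split.
  - intros [Ha Hj]. rewrite <- (pair_meet_idem z).
    apply (saturation_meet_l (si_union S) (proj1_sig a)); auto.
    + apply saturated_down_closed, (proj2_sig a).
    + intros [s1 s2] [t1 t2] [D [HD Hs]] Ht. apply saturation_incl.
      exists (si_meet a D). split; [exists D; split; auto |]. unfold pair_meet; simpl; split.
      * eapply (sat_down (proj2_sig a)); [exact Ht | apply fmeet_lb_r | apply fmeet_lb_r].
      * eapply (sat_down (proj2_sig D)); [exact Hs | apply fmeet_lb_l | apply fmeet_lb_l].
  - apply (saturation_least _ (fun z => proj1_sig a z /\ saturation (si_union S) z)).
    + apply saturated_and; [apply (proj2_sig a) | apply saturation_saturated].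
    + intros w [D [[s [Hs ->]] [H1 H2]]]. split; auto. apply saturation_incl; exists s; auto.
Qed.

Definition pullback_frame : Frame.
Proof.
  refine {| fcar := sat_ideal; fle := si_le; fmeet := si_meet; ftop := si_top;
            fsup := si_sup; fsup_lub := si_sup_lub; fdistr := si_distr |}.
  - intros a z; auto.
  - intros a b c H1 H2 z Hz; auto.
  - intros a b H1 H2; apply sat_ideal_ext; intro z; split; auto.
  - intros a b c; split.
    + intro H; split; intros z Hz; destruct (H z Hz); auto.
    + intros [H1 H2] z Hz; split; auto.
  - intros a z _; exact I.
Defined.

Definition down_l (x : A) : AB -> Prop := fun z => fle (fst z) x.
Definition down_r (y : B) : AB -> Prop := fun z => fle (snd z) y.

Lemma down_l_closed x : down_closed (down_l x).
Proof. intros a b a' b' H H1 _; unfold down_l in *; simpl in *; eapply fle_trans; eauto. Qed.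

Lemma down_r_closed y : down_closed (down_r y).
Proof. intros a b a' b' H _ H2; unfold down_r in *; simpl in *; eapply fle_trans; eauto. Qed.

Definition pr1_ideal (x : A) : pullback_frame := exist _ (saturation (down_l x)) (saturation_saturated _).
Definition pr2_ideal (y : B) : pullback_frame := exist _ (saturation (down_r y)) (saturation_saturated _).

Definition pullback_pr1 : LMap pullback_frame A.
Proof.
  refine {| lm := pr1_ideal |}.
  - apply sat_ideal_ext; intro z; simpl; split; auto.
    intros _; apply saturation_incl, ftop_max.
  - intros a b; apply sat_ideal_ext; intro z; simpl; split.
    + intro H; split; revert z H; apply saturation_mono; intros z Hz; unfold down_l in *;
        (eapply fle_trans; [exact Hz | first [apply fmeet_lb_l | apply fmeet_lb_r]]).
    + intros [H1 H2]. rewrite <- (pair_meet_idem z).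
      apply (saturation_meet (down_l a) (down_l b)); auto using down_l_closed.
      intros [s1 s2] [t1 t2] Hs Ht; apply saturation_incl; unfold down_l, pair_meet in *; simpl in *.
      apply fmeet_mono; auto.
  - intros S; apply sat_ideal_ext; intros [x y]; simpl; split.
    + apply saturation_least; [apply saturation_saturated |].
      intros [x' y'] Hx; unfold down_l in Hx; simpl in Hx.
      rewrite <- (fmeet_idPl _ _ Hx), fdistr. apply sat_join_l; [apply saturation_saturated |].
      intros w [s [Hs ->]]. apply saturation_incl. exists (pr1_ideal s); split.
      * exists s; split; auto.
      * simpl; apply saturation_incl; unfold down_l; simpl; apply fmeet_lb_r.
    + apply saturation_least; [apply saturation_saturated |].
      intros w [D [[s [Hs ->]] Hw]]. simpl in Hw. revert Hw. apply saturation_mono.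
      intros z Hz; unfold down_l in *; eapply fle_trans; [exact Hz | apply fsup_ub; auto].
Defined.

Definition pullback_pr2 : LMap pullback_frame B.
Proof.
  refine {| lm := pr2_ideal |}.
  - apply sat_ideal_ext; intro z; simpl; split; auto.
    intros _; apply saturation_incl, ftop_max.
  - intros a b; apply sat_ideal_ext; intro z; simpl; split.
    + intro H; split; revert z H; apply saturation_mono; intros z Hz; unfold down_r in *;
        (eapply fle_trans; [exact Hz | first [apply fmeet_lb_l | apply fmeet_lb_r]]).
    + intros [H1 H2]. rewrite <- (pair_meet_idem z).
      apply (saturation_meet (down_r a) (down_r b)); auto using down_r_closed.
      intros [s1 s2] [t1 t2] Hs Ht; apply saturation_incl; unfold down_r, pair_meet in *; simpl in *.
      apply fmeet_mono; auto.
  - intros S; apply sat_ideal_ext; intros [x y]; simpl; split.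
    + apply saturation_least; [apply saturation_saturated |].
      intros [x' y'] Hy; unfold down_r in Hy; simpl in Hy.
      rewrite <- (fmeet_idPl _ _ Hy), fdistr. apply sat_join_r; [apply saturation_saturated |].
      intros w [s [Hs ->]]. apply saturation_incl. exists (pr2_ideal s); split.
      * exists s; split; auto.
      * simpl; apply saturation_incl; unfold down_r; simpl; apply fmeet_lb_r.
    + apply saturation_least; [apply saturation_saturated |].
      intros w [D [[s [Hs ->]] Hw]]. simpl in Hw. revert Hw. apply saturation_mono.
      intros z Hz; unfold down_r in *; eapply fle_trans; [exact Hz | apply fsup_ub; auto].
Defined.

Lemma pullback_frame_square : lmap_eq (lcomp g pullback_pr1) (lcomp q pullback_pr2).
Proof.
  intro c; simpl. apply sat_ideal_ext; simpl; split.
  - apply saturation_least; [apply saturation_saturated |].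
    intros [x y] Hx; unfold down_l in Hx; simpl in Hx.
    rewrite <- (fmeet_idPl _ _ Hx). apply sat_shift_l; [apply saturation_saturated |].
    apply saturation_incl; unfold down_r; simpl; apply fmeet_lb_r.
  - apply saturation_least; [apply saturation_saturated |].
    intros [x y] Hy; unfold down_r in Hy; simpl in Hy.
    rewrite <- (fmeet_idPl _ _ Hy). apply sat_shift_r; [apply saturation_saturated |].
    apply saturation_incl; unfold down_l; simpl; apply fmeet_lb_r.
Qed.

Section Lift.
Context {W : Frame} (a : LMap W A) (b : LMap W B).
Hypothesis Hab : lmap_eq (lcomp g a) (lcomp q b).

Definition lift_generators (D : AB -> Prop) : W -> Prop :=
  fun w => exists x y, D (x, y) /\ w = fmeet (a x) (b y).
Definition lift_fun (D : pullback_frame) : W := fsup (lift_generators (proj1_sig D)).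

Lemma lift_bound_saturated (w0 : W) :
  saturated (fun z => fle (fmeet (a (fst z)) (b (snd z))) w0).
Proof.
  pose proof Hab as E. pointwise_in E.
  constructor; simpl.
  - intros x y x' y' H H1 H2. eapply fle_trans; [| exact H].
    apply fmeet_mono; apply lm_mono; auto.
  - intros S y H. rewrite lm_sup. apply fsup_fmeet_le. intros s [x [Hx ->]]. auto.
  - intros x S H. rewrite lm_sup. apply fmeet_fsup_le. intros s [y [Hy ->]]. auto.
  - intros x y c H. rewrite lm_meet, E, fmeet_assoc, (fmeet_comm (b (q c))) in H.
    rewrite lm_meet; exact H.
  - intros x y c H. rewrite lm_meet in H. rewrite lm_meet, E, fmeet_assoc, (fmeet_comm (b (q c))).
    exact H.
Qed.

Lemma lift_fun_le (S : AB -> Prop) (w0 : W) :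
  (forall x y, S (x, y) -> fle (fmeet (a x) (b y)) w0) ->
  forall D : pullback_frame, (forall z, proj1_sig D z -> saturation S z) -> fle (lift_fun D) w0.
Proof.
  intros H D HD. apply fsup_least. intros s [x [y [Hxy ->]]].
  apply (saturation_least S _ (lift_bound_saturated w0)) with (w := (x, y)).
  - intros [x' y'] Hw; apply H; auto.
  - apply HD; auto.
Qed.

Lemma lift_fun_mono (D E : pullback_frame) : fle D E -> fle (lift_fun D) (lift_fun E).
Proof.
  intro H. apply fsup_mono. intros w [x [y [Hxy ->]]].
  exists x, y; split; [apply H; exact Hxy | reflexivity].
Qed.

Lemma lift_fun_ub (D : pullback_frame) x y :
  proj1_sig D (x, y) -> fle (fmeet (a x) (b y)) (lift_fun D).
Proof. intro H. apply fsup_ub. exists x, y; auto. Qed.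

Lemma lift_fun_meet (D E : pullback_frame) :
  lift_fun (fmeet D E) = fmeet (lift_fun D) (lift_fun E).
Proof.
  apply fle_antisym.
  - apply fmeet_greatest; apply lift_fun_mono; intros z [H1 H2]; auto.
  - unfold lift_fun at 1 2. rewrite fdistr_r. apply fsup_least.
    intros s [s1 [[x [y [Hxy ->]]] ->]].
    rewrite fdistr. apply fsup_least. intros s [s2 [[x' [y' [Hxy' ->]]] ->]].
    eapply fle_trans; [| apply (lift_fun_ub _ (fmeet x x') (fmeet y y'))].
    + rewrite !lm_meet. apply fmeet_greatest; apply fmeet_greatest.
      * eapply fle_trans; [apply fmeet_lb_l | apply fmeet_lb_l].
      * eapply fle_trans; [apply fmeet_lb_r | apply fmeet_lb_l].
      * eapply fle_trans; [apply fmeet_lb_l | apply fmeet_lb_r].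
      * eapply fle_trans; [apply fmeet_lb_r | apply fmeet_lb_r].
    + simpl; split.
      * eapply (sat_down (proj2_sig D)); [exact Hxy | apply fmeet_lb_l | apply fmeet_lb_l].
      * eapply (sat_down (proj2_sig E)); [exact Hxy' | apply fmeet_lb_r | apply fmeet_lb_r].
Qed.

Definition pullback_frame_lift : LMap W pullback_frame.
Proof.
  refine {| lm := lift_fun; lm_meet := lift_fun_meet |}.
  - apply fle_antisym; [apply ftop_max |].
    eapply fle_trans; [| apply (lift_fun_ub _ ftop ftop)].
    + rewrite !lm_top, fmeet_top_r; apply fle_refl.
    + simpl; exact I.
  - intros S. apply fle_antisym.
    + apply (lift_fun_le (si_union S)).
      * intros x y [D [HD Hxy]]. eapply fle_trans; [apply (lift_fun_ub D); exact Hxy |].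
        apply fsup_ub. exists D; auto.
      * simpl; auto.
    + apply fsup_least. intros w [D [HD ->]]. apply lift_fun_mono.
      intros z Hz; simpl. apply saturation_incl. exists D; auto.
Defined.

Lemma pullback_frame_lift_pr1 : lmap_eq (lcomp pullback_pr1 pullback_frame_lift) a.
Proof.
  intro x. simpl. apply fle_antisym.
  - apply (lift_fun_le (down_l x)); [| simpl; auto].
    intros x' y Hx; unfold down_l in Hx; simpl in Hx.
    eapply fle_trans; [apply fmeet_lb_l | apply lm_mono; auto].
  - eapply fle_trans; [| apply (lift_fun_ub _ x ftop)].
    + rewrite lm_top, fmeet_top_r; apply fle_refl.
    + simpl; apply saturation_incl; unfold down_l; apply fle_refl.
Qed.

Lemma pullback_frame_lift_pr2 : lmap_eq (lcomp pullback_pr2 pullback_frame_lift) b.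
Proof.
  intro y. simpl. apply fle_antisym.
  - apply (lift_fun_le (down_r y)); [| simpl; auto].
    intros x y' Hy; unfold down_r in Hy; simpl in Hy.
    eapply fle_trans; [apply fmeet_lb_r | apply lm_mono; auto].
  - eapply fle_trans; [| apply (lift_fun_ub _ ftop y)].
    + rewrite lm_top, fmeet_top_l; apply fle_refl.
    + simpl; apply saturation_incl; unfold down_r; apply fle_refl.
Qed.
End Lift.

Lemma pullback_frame_decomp (D : pullback_frame) :
  D = fsup (fun E => exists x y, proj1_sig D (x, y) /\
                                 E = fmeet (pullback_pr1 x) (pullback_pr2 y)).
Proof.
  apply sat_ideal_ext; intro z; simpl; split.
  - intro H. apply saturation_incl. exists (fmeet (pullback_pr1 (fst z)) (pullback_pr2 (snd z))).
    split.
    + exists (fst z), (snd z); destruct z; auto.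
    + simpl; split; apply saturation_incl; apply fle_refl.
  - apply (saturation_least _ _ (proj2_sig D)). intros w [E [[x [y [Hxy ->]]] [H1 H2]]].
    simpl in H1, H2. rewrite <- (pair_meet_idem w).
    assert (Hw : saturation (fun z => fle (fst z) x /\ fle (snd z) y) (pair_meet w w)).
    { apply (saturation_meet (down_l x) (down_r y)); auto using down_r_closed.
      intros [s1 s2] [t1 t2] Hs Ht; apply saturation_incl; unfold down_l, down_r, pair_meet in *.
      simpl in *. split; eapply fle_trans; [apply fmeet_lb_l | exact Hs | apply fmeet_lb_r | exact Ht]. }
    revert Hw. apply (saturation_least _ _ (proj2_sig D)). intros [x' y'] [Hx Hy].
    eapply (sat_down (proj2_sig D)); eauto.
Qed.

Lemma pullback_frame_is_pullback : is_pullback g q pullback_pr1 pullback_pr2.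
Proof.
  split; [apply pullback_frame_square |]. intros W a b Hab. split.
  - exists (pullback_frame_lift a b Hab).
    split; [apply pullback_frame_lift_pr1 | apply pullback_frame_lift_pr2].
  - intros h h' H1 H2 D. rewrite (pullback_frame_decomp D), !lm_sup. apply fsup_ext. intro w.
    split; intros [E [[x [y [Hxy ->]]] ->]]; exists (fmeet (pullback_pr1 x) (pullback_pr2 y));
      (split; [exists x, y; auto |]); rewrite !lm_meet; assert (E1 : h (pullback_pr1 x) = h' (pullback_pr1 x)) by apply H1;
      assert (E2 : h (pullback_pr2 y) = h' (pullback_pr2 y)) by apply H2; rewrite E1, E2; reflexivity.
Qed.

End PullbackFrame.
Arguments sat_down {A B C g q D}. Arguments sat_join_l {A B C g q D}.
Arguments sat_join_r {A B C g q D}. Arguments sat_shift_r {A B C g q D}.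
Arguments sat_shift_l {A B C g q D}.
Arguments saturation_saturated {A B C g q} S.
Arguments saturation_incl {A B C g q} S w _ D _ _.
Arguments saturation_least {A B C g q} S D _ _ w _.

(** * Open surjections and descent *)

Section LeftAdjoint.
Context {B C : Frame} (q : LMap B C) (qs : B -> C).
Hypothesis Hadj : forall y c, fle (qs y) c <-> fle y (q c).

Lemma ladj_unit y : fle y (q (qs y)).
Proof. apply Hadj, fle_refl. Qed.

Lemma ladj_mono y y' : fle y y' -> fle (qs y) (qs y').
Proof. intro H. apply Hadj. eapply fle_trans; [exact H | apply ladj_unit]. Qed.

Lemma ladj_fsup (S : B -> Prop) : qs (fsup S) = fsup (fun c => exists y, S y /\ c = qs y).
Proof.
  apply fle_antisym.
  - apply Hadj. apply fsup_least. intros s Hs. apply Hadj. apply fsup_ub; exists s; auto.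
  - apply fsup_least. intros c [y [Hy ->]]. apply ladj_mono, fsup_ub; auto.
Qed.

Lemma ladj_top_of_surj : is_surj q -> qs ftop = ftop.
Proof.
  intro Hs. apply Hs. rewrite lm_top. apply fle_antisym; [apply ftop_max | apply ladj_unit].
Qed.
End LeftAdjoint.

Section OpenPullback.
Context {A B C : Frame} (g : LMap A C) (q : LMap B C) (qs : B -> C).
Hypothesis Hadj : forall y c, fle (qs y) c <-> fle y (q c).
Hypothesis Hfrob : forall y c, qs (fmeet y (q c)) = fmeet (qs y) c.

Local Notation P := (pullback_frame g q).

Definition pr1_ladj (D : P) : A :=
  fsup (fun w => exists x y, proj1_sig D (x, y) /\ w = fmeet x (g (qs y))).

Lemma pr1_ladj_bound_saturated (w0 : A) :
  saturated g q (fun z => fle (fmeet (fst z) (g (qs (snd z)))) w0).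
Proof.
  constructor; simpl.
  - intros x y x' y' H H1 H2. eapply fle_trans; [| exact H]. apply fmeet_mono; auto.
    apply lm_mono, (ladj_mono q qs Hadj); auto.
  - intros S y H. apply fsup_fmeet_le. auto.
  - intros x S y. rewrite (ladj_fsup q qs Hadj), lm_sup. apply fmeet_fsup_le.
    intros s [c [[y' [Hy' ->]] ->]]. auto.
  - intros x y c H. rewrite Hfrob, lm_meet, <- fmeet_assoc, fmeet_right_comm. exact H.
  - intros x y c H. rewrite Hfrob, lm_meet, <- fmeet_assoc, fmeet_right_comm in H. exact H.
Qed.

Lemma pr1_ladj_adj (D : P) (w : A) : fle (pr1_ladj D) w <-> fle D (pullback_pr1 g q w).
Proof.
  split.
  - intros H [x y] Hxy. simpl.
    assert (H1 : fle (fmeet x (g (qs y))) w)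
      by (eapply fle_trans; [| exact H]; apply fsup_ub; exists x, y; auto).
    assert (H2 : saturation g q (down_l w) (fmeet x (g (qs y)), y))
      by (apply saturation_incl; exact H1).
    apply (sat_shift_r (saturation_saturated _)) in H2.
    refine (sat_down (saturation_saturated _) _ _ _ _ H2 (fle_refl _) _).
    apply fmeet_greatest; [apply fle_refl | apply (ladj_unit q qs Hadj)].
  - intro H. apply fsup_least. intros s [x [y [Hxy ->]]].
    specialize (H _ Hxy). simpl in H. revert H.
    apply (saturation_least _ _ (pr1_ladj_bound_saturated w)).
    intros [x' y'] Hx; unfold down_l in Hx; simpl in *.
    eapply fle_trans; [apply fmeet_lb_l | exact Hx].
Qed.

Lemma pr1_ladj_frobenius (D : P) (w : A) :
  pr1_ladj (fmeet D (pullback_pr1 g q w)) = fmeet (pr1_ladj D) w.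
Proof.
  apply fle_antisym.
  - apply fmeet_greatest.
    + apply fsup_mono. intros s [x [y [[Hxy _] ->]]]. exists x, y; auto.
    + apply pr1_ladj_adj. intros z [_ Hz]; exact Hz.
  - unfold pr1_ladj at 1. rewrite fdistr_r. apply fsup_least.
    intros s [s' [[x [y [Hxy ->]]] ->]].
    eapply fle_trans; [| apply fsup_ub; exists (fmeet x w), y; split; [| reflexivity]].
    + rewrite fmeet_right_comm; apply fle_refl.
    + simpl; split.
      * eapply (sat_down (proj2_sig D)); [exact Hxy | apply fmeet_lb_l | apply fle_refl].
      * apply saturation_incl. unfold down_l; simpl; apply fmeet_lb_r.
Qed.

Lemma pr1_ladj_pr1 : qs ftop = ftop -> forall w, pr1_ladj (pullback_pr1 g q w) = w.
Proof.
  intros Htop w. apply fle_antisym.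
  - apply pr1_ladj_adj, fle_refl.
  - eapply fle_trans; [| apply fsup_ub; exists w, ftop; split; [| reflexivity]].
    + rewrite Htop, lm_top, fmeet_top_r; apply fle_refl.
    + simpl; apply saturation_incl; unfold down_l; apply fle_refl.
Qed.
End OpenPullback.

Lemma pullback_pr1_open_surj {A B C : Frame} (g : LMap A C) (q : LMap B C) :
  is_open_surj q -> is_open_surj (pullback_pr1 g q).
Proof.
  intros [[qs [Hadj Hfrob]] Hs].
  pose proof (ladj_top_of_surj q qs Hadj Hs) as Htop.
  split.
  - exists (pr1_ladj g q qs). split; [apply pr1_ladj_adj | apply pr1_ladj_frobenius]; auto.
  - intros a b E.
    rewrite <- (pr1_ladj_pr1 g q qs Hadj Hfrob Htop a), E. apply pr1_ladj_pr1; auto.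
Qed.

(* The factor has inverse image [qs o h]; it is a frame map because
   [q (qs (h t)) = h t], which is where [h] coequalizing the kernel pair of [q] is used. *)
Lemma open_surj_descent {Y Z T : Frame} (q : LMap Y Z) (h : LMap Y T) :
  is_open_surj q ->
  lmap_eq (lcomp h (pullback_pr1 q q)) (lcomp h (pullback_pr2 q q)) ->
  exists hb : LMap Z T, lmap_eq (lcomp hb q) h.
Proof.
  intros [[qs [Hadj Hfrob]] Hs] Hh.
  assert (Hfix : forall t, q (qs (h t)) = h t).
  { intro t. apply fle_antisym; [| apply (ladj_unit q qs Hadj)].
    assert (E : pullback_pr1 q q (h t) = pullback_pr2 q q (h t)) by apply Hh.
    apply fle_trans with (pr1_ladj q q qs (pullback_pr2 q q (h t))).
    - eapply fle_trans; [| apply fsup_ub; exists ftop, (h t); split; [| reflexivity]].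
      + rewrite fmeet_top_l; apply fle_refl.
      + simpl; apply saturation_incl; unfold down_r; apply fle_refl.
    - rewrite <- E. apply pr1_ladj_adj; auto. apply fle_refl. }
  unshelve refine (ex_intro _ (@Build_LMap Z T (fun t : T => qs (h t)) _ _ _) _); simpl.
  - rewrite lm_top; exact (ladj_top_of_surj q qs Hadj Hs).
  - intros a b. rewrite lm_meet, <- (Hfix b), Hfrob, Hfix. reflexivity.
  - intros S. rewrite lm_sup, (ladj_fsup q qs Hadj). apply fsup_ext. intro c; split.
    + intros [y [[s [Hs' ->]] ->]]. exists s; auto.
    + intros [s [Hs' ->]]. exists (h s); split; auto. exists s; auto.
  - intro t; simpl. apply Hfix.
Qed.

(* Keeps [simpl] from unfolding the projections into saturations. *)
Opaque pullback_pr1 pullback_pr2.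

(** * Principal bundles *)

Section Division.
Context {G : OpenGroupoid} {N : Frame} (Z : PrincipalBundle G N).
Local Notation ZL := (pb_loc Z).
Local Notation piZ := (pb_proj Z).

Lemma pb_divide {W : Frame} (z1 z2 : LMap W (pb_sp Z)) :
  lmap_eq (lcomp piZ z1) (lcomp piZ z2) ->
  exists u : LMap W (adom ZL), lmap_eq (lcomp (act ZL) u) z1 /\ lmap_eq (lcomp (ap2 ZL) u) z2.
Proof.
  intro Hz.
  destruct (pb_pair_iso (pullback_frame_is_pullback piZ piZ))
    as [c [Hc1 [Hc2 [e [He1 He2]]]]].
  pointwise_in Hc1. pointwise_in Hc2. pointwise_in He2.
  destruct (pullback_lift (pullback_frame_is_pullback piZ piZ) z1 z2 Hz) as [n [Hn1 Hn2]].
  pointwise_in Hn1. pointwise_in Hn2.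
  exists (lcomp e n). split; pointwise.
  - rewrite <- Hc1, He2. apply Hn1.
  - rewrite <- Hc2, He2. apply Hn2.
Qed.

Lemma pb_divide_unique {W : Frame} (u u' : LMap W (adom ZL)) :
  lmap_eq (lcomp (act ZL) u) (lcomp (act ZL) u') ->
  lmap_eq (lcomp (ap2 ZL) u) (lcomp (ap2 ZL) u') -> lmap_eq u u'.
Proof.
  intros H1 H2.
  destruct (pb_pair_iso (pullback_frame_is_pullback piZ piZ))
    as [c [Hc1 [Hc2 [e [He1 He2]]]]].
  assert (E : lmap_eq (lcomp c u) (lcomp c u')).
  { pointwise_in Hc1. pointwise_in Hc2. pointwise_in H1. pointwise_in H2.
    apply (pullback_lift_unique (pullback_frame_is_pullback piZ piZ)); pointwise.
    - rewrite Hc1. apply H1.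
    - rewrite Hc2. apply H2. }
  pointwise_in E. pointwise_in He1. intro y. rewrite <- (He1 y). apply E.
Qed.
End Division.

Lemma equivariant_act {G : OpenGroupoid} {X Y : GLocale G} {phi : LMap (gl_sp X) (gl_sp Y)}
    {W : Frame} (v : LMap W (adom X)) (v' : LMap W (adom Y)) :
  equivariant phi ->
  lmap_eq (lcomp (ap1 Y) v') (lcomp (ap1 X) v) ->
  lmap_eq (lcomp (ap2 Y) v') (lcomp phi (lcomp (ap2 X) v)) ->
  lmap_eq (lcomp phi (lcomp (act X) v)) (lcomp (act Y) v').
Proof.
  intros [Hanchor Hact] H1 H2. pointwise_in Hanchor.
  destruct (pullback_lift (adom_pb Y) (ap1 X) (lcomp phi (ap2 X))) as [k [Hk1 Hk2]].
  { pointwise. rewrite Hanchor. apply (pullback_square (adom_pb X)). }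
  pose proof (Hact k Hk1 Hk2) as Hk. pointwise_in Hk. pointwise_in Hk1. pointwise_in Hk2.
  assert (Ekv : lmap_eq (lcomp k v) v').
  { pointwise_in H1. pointwise_in H2.
    apply (pullback_lift_unique (adom_pb Y)); pointwise.
    - rewrite Hk1, H1. reflexivity.
    - rewrite Hk2, H2. reflexivity. }
  pointwise_in Ekv. pointwise. rewrite Hk. apply Ekv.
Qed.

Section BundleMapIso.
Context {G : OpenGroupoid} {N : Frame} (Y Z : PrincipalBundle G N).
Local Notation YL := (pb_loc Y).
Local Notation ZL := (pb_loc Z).
Local Notation piY := (pb_proj Y).
Local Notation piZ := (pb_proj Z).
Variable phi : LMap (pb_sp Y) (pb_sp Z).
Hypothesis Hphi : equivariant phi.
Hypothesis Hpi : lmap_eq (lcomp piZ phi) piY.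

Local Notation P := (pullback_frame piZ piY).
Local Notation w1 := (pullback_pr1 piZ piY).
Local Notation w2 := (pullback_pr2 piZ piY).

(* Over [(z, y)] in [Z x_N Y], [u] is the pair [(g, phi y)] with [g . phi y = z],
   and [m] is the pair [(g, y)]; the inverse of [phi] sends [z] to [g . y]. *)
Section Transport.
Variable u : LMap P (adom ZL).
Hypothesis Hu1 : lmap_eq (lcomp (act ZL) u) w1.
Hypothesis Hu2 : lmap_eq (lcomp (ap2 ZL) u) (lcomp phi w2).
Variable m : LMap P (adom YL).
Hypothesis Hm1 : lmap_eq (lcomp (ap1 YL) m) (lcomp (ap1 ZL) u).
Hypothesis Hm2 : lmap_eq (lcomp (ap2 YL) m) w2.

Local Notation transport := (lcomp (act YL) m).

Lemma phi_transport : lmap_eq (lcomp phi transport) w1.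
Proof.
  assert (H2 : lmap_eq (lcomp (ap2 ZL) u) (lcomp phi (lcomp (ap2 YL) m))).
  { pointwise_in Hu2. pointwise_in Hm2. pointwise. rewrite Hm2. apply Hu2. }
  pose proof (equivariant_act m u Hphi (fun y => eq_sym (Hm1 y)) H2) as E.
  pointwise_in E. pointwise_in Hu1. pointwise. rewrite E. apply Hu1.
Qed.

Lemma transport_section (j : LMap (pb_sp Y) P) :
  lmap_eq (lcomp w1 j) phi -> lmap_eq (lcomp w2 j) (lid _) ->
  lmap_eq (lcomp transport j) (lid _).
Proof.
  intros Hj1 Hj2. destruct Hphi as [Hanchor _].
  pointwise_in Hj1. pointwise_in Hj2. pointwise_in Hanchor.
  destruct (pullback_lift (adom_pb ZL) (lcomp (gu G) (lcomp (anchor ZL) phi)) phi)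
    as [v [Hv1 Hv2]].
  { pointwise. pose proof (@gd_u G) as E. pointwise_in E. rewrite E. reflexivity. }
  pose proof (@act_unit G ZL _ phi v Hv1 Hv2) as Hv. pointwise_in Hv.
  pointwise_in Hv1. pointwise_in Hv2.
  assert (Euj : lmap_eq (lcomp u j) v).
  { pointwise_in Hu1. pointwise_in Hu2.
    apply (pb_divide_unique Z); pointwise.
    - rewrite Hu1, Hv. apply Hj1.
    - rewrite Hu2, Hv2. apply Hj2. }
  pointwise_in Euj. pointwise_in Hm1. pointwise_in Hm2.
  apply (@act_unit G YL _ (lid _) (lcomp m j)); pointwise.
  - rewrite Hm1, Euj, Hv1, Hanchor. reflexivity.
  - rewrite Hm2. apply Hj2.
Qed.

(* With [g_i := ap1 (u k_i)] and [e = (gg, y1)] satisfying [gg . y1 = y2], associativity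
   gives [(g2 gg) . phi y1 = g2 . phi y2 = g1 . phi y1], so by uniqueness of division
   [u k1 = (g2 gg, phi y1)]. *)
Lemma transport_arrow_mul {W : Frame} (k1 k2 : LMap W P) (e : LMap W (adom YL))
    (h3 : LMap W (G2 G)) (v : LMap W (adom ZL)) :
  lmap_eq (lcomp w1 k1) (lcomp w1 k2) ->
  lmap_eq (lcomp (act YL) e) (lcomp w2 k2) -> lmap_eq (lcomp (ap2 YL) e) (lcomp w2 k1) ->
  lmap_eq (lcomp (gp1 G) h3) (lcomp (ap1 ZL) (lcomp u k2)) ->
  lmap_eq (lcomp (gp2 G) h3) (lcomp (ap1 YL) e) ->
  lmap_eq (lcomp (ap1 ZL) v) (lcomp (gmul G) h3) ->
  lmap_eq (lcomp (ap2 ZL) v) (lcomp phi (lcomp w2 k1)) ->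
  lmap_eq (lcomp u k1) v.
Proof.
  intros Hk He1 He2 Hh31 Hh32 Hv1 Hv2. pose proof Hphi as [Hanchor _].
  pointwise_in Hk. pointwise_in Hanchor. pointwise_in Hu1. pointwise_in Hu2.
  pointwise_in He1. pointwise_in He2.
  destruct (pullback_lift (adom_pb ZL) (lcomp (ap1 YL) e) (lcomp phi (lcomp w2 k1)))
    as [h1 [Hh11 Hh12]].
  { pointwise. rewrite (pullback_square (adom_pb YL)), He2, Hanchor. reflexivity. }
  pointwise_in Hh12.
  assert (Hh1 : lmap_eq (lcomp (act ZL) h1) (lcomp phi (lcomp w2 k2))).
  { assert (Hh12' : lmap_eq (lcomp (ap2 ZL) h1) (lcomp phi (lcomp (ap2 YL) e)))
      by (pointwise; rewrite Hh12, He2; reflexivity).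
    pose proof (equivariant_act e h1 Hphi Hh11 Hh12') as E. pointwise_in E.
    pointwise. rewrite <- E, He1. reflexivity. }
  pointwise_in Hh1.
  assert (Hassoc : lmap_eq (lcomp (act ZL) (lcomp u k2)) (lcomp (act ZL) v)).
  { apply (@act_assoc G ZL W (lcomp (ap1 ZL) (lcomp u k2)) (lcomp (ap1 YL) e)
             (lcomp phi (lcomp w2 k1)) h1 (lcomp u k2) h3 v);
      try assumption; pointwise; [reflexivity | rewrite Hu2, Hh1; reflexivity]. }
  pointwise_in Hassoc. pointwise_in Hv2.
  apply (pb_divide_unique Z); pointwise.
  - rewrite Hu1, Hk, <- Hu1. apply Hassoc.
  - rewrite Hu2, Hv2. reflexivity.
Qed.

Lemma transport_coequalizes {W : Frame} (k1 k2 : LMap W P) :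
  lmap_eq (lcomp w1 k1) (lcomp w1 k2) ->
  lmap_eq (lcomp transport k1) (lcomp transport k2).
Proof.
  intro Hk. pose proof Hphi as [Hanchor _]. pose proof Hk as Hk'.
  pointwise_in Hk'. pointwise_in Hanchor. pose proof Hu2 as Hu2'. pointwise_in Hu2'.
  pointwise_in Hm1. pointwise_in Hm2.
  pose proof (anchor_act YL) as HaY. pointwise_in HaY.
  destruct (pb_divide Y (lcomp w2 k2) (lcomp w2 k1)) as [e [He1 He2]].
  { pose proof (pullback_square (pullback_frame_is_pullback piZ piY)) as Hsq.
    pointwise. rewrite <- !Hsq. symmetry. apply Hk'. }
  destruct (pullback_lift (@G2_pb G) (lcomp (ap1 ZL) (lcomp u k2)) (lcomp (ap1 YL) e))
    as [h3 [Hh31 Hh32]].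
  { pose proof He1 as E. pointwise_in E.
    pointwise. rewrite (pullback_square (adom_pb ZL)), Hu2', Hanchor, <- HaY, E. reflexivity. }
  assert (Hgmul : lmap_eq (lcomp (gd G) (lcomp (gmul G) h3))
                          (lcomp (anchor ZL) (lcomp phi (lcomp w2 k1)))).
  { pose proof (@gd_mul G) as E. pointwise_in E. pose proof Hh32 as E3. pointwise_in E3.
    pose proof He2 as E2. pointwise_in E2.
    pointwise. rewrite E, E3, (pullback_square (adom_pb YL)), E2, Hanchor. reflexivity. }
  destruct (pullback_lift (adom_pb ZL) _ _ Hgmul) as [v [Hv1 Hv2]].
  pose proof (transport_arrow_mul k1 k2 e h3 v Hk He1 He2 Hh31 Hh32 Hv1 Hv2) as Euv.
  pointwise_in Euv. pointwise_in Hv1. pointwise_in He1. pointwise_in He2.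
  pointwise. symmetry.
  apply (@act_assoc G YL W (lcomp (ap1 ZL) (lcomp u k2)) (lcomp (ap1 YL) e) (lcomp w2 k1)
           e (lcomp m k2) h3 (lcomp m k1));
    try assumption; pointwise.
  - reflexivity.
  - rewrite Hm1. reflexivity.
  - rewrite Hm2, He1. reflexivity.
  - rewrite Hm1, Euv, Hv1. reflexivity.
  - rewrite Hm2. reflexivity.
Qed.
End Transport.

Lemma bundle_map_is_iso : is_iso phi.
Proof.
  pose proof (pullback_frame_is_pullback piZ piY) as HP.
  pose proof Hpi as Hpi'. pointwise_in Hpi'.
  pose proof Hphi as [Hanchor _]. pointwise_in Hanchor.
  destruct (pb_divide Z w1 (lcomp phi w2)) as [u [Hu1 Hu2]].
  { pointwise. rewrite Hpi'. apply (pullback_square HP). }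
  destruct (pullback_lift (adom_pb YL) (lcomp (ap1 ZL) u) w2) as [m [Hm1 Hm2]].
  { pose proof Hu2 as E. pointwise_in E. pointwise.
    rewrite (pullback_square (adom_pb ZL)), E, Hanchor. reflexivity. }
  assert (Hw1 : is_open_surj w1) by apply pullback_pr1_open_surj, pb_open_surj.
  destruct (open_surj_descent w1 (lcomp (act YL) m) Hw1
              (transport_coequalizes u Hu1 Hu2 m Hm1 Hm2 _ _ (pullback_frame_square w1 w1)))
    as [chi Hchi].
  pointwise_in Hchi. exists chi. split.
  - destruct (pullback_lift HP phi (lid _)) as [j [Hj1 Hj2]].
    { pointwise. apply Hpi'. }
    pose proof (transport_section u Hu1 Hu2 m Hm1 Hm2 j Hj1 Hj2) as E.
    pointwise_in E. pointwise_in Hj1. pointwise.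
    rewrite <- Hj1, Hchi. apply E.
  - pose proof (phi_transport u Hu1 Hu2 m Hm1 Hm2) as E. pointwise_in E.
    pointwise. apply (proj2 Hw1). rewrite Hchi. apply E.
Qed.
End BundleMapIso.

Section PullbackBundle.
Context {G : OpenGroupoid} {M Mt : Frame} (X : PrincipalBundle G M) (f : LMap Mt M).
Local Notation XL := (pb_loc X).
Local Notation pi := (pb_proj X).
Local Notation p := (anchor XL).

Context {T : Frame} {t1 : LMap T Mt} {t2 : LMap T (gl_sp XL)}.
Hypothesis HT : is_pullback f pi t1 t2.
Hypothesis Hop : is_open_surj t1.
Context {At : Frame} {b1 : LMap At (G1 G)} {b2 : LMap At T}.
Hypothesis HAt : is_pullback (gd G) (lcomp p t2) b1 b2.
Context {k : LMap At (adom XL)}.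
Hypothesis Hk1 : lmap_eq (lcomp (ap1 XL) k) b1.
Hypothesis Hk2 : lmap_eq (lcomp (ap2 XL) k) (lcomp t2 b2).
Context {act_t : LMap At T}.
Hypothesis Ha1 : lmap_eq (lcomp t1 act_t) (lcomp t1 b2).
Hypothesis Ha2 : lmap_eq (lcomp t2 act_t) (lcomp (act XL) k).

Lemma pullback_anchor_act : lmap_eq (lcomp (lcomp p t2) act_t) (lcomp (gr G) b1).
Proof.
  pose proof Ha2 as E2. pointwise_in E2. pose proof Hk1 as E1. pointwise_in E1.
  pose proof (anchor_act XL) as E. pointwise_in E.
  pointwise. rewrite E2, E, E1. reflexivity.
Qed.

Lemma pullback_act_unit (W : Frame) (x : LMap W T) (h : LMap W At) :
  lmap_eq (lcomp b1 h) (lcomp (gu G) (lcomp (lcomp p t2) x)) ->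
  lmap_eq (lcomp b2 h) x -> lmap_eq (lcomp act_t h) x.
Proof.
  intros H1 H2. pose proof Ha1 as A1. pointwise_in A1. pose proof Ha2 as A2. pointwise_in A2.
  pose proof Hk1 as K1. pointwise_in K1. pose proof Hk2 as K2. pointwise_in K2.
  pointwise_in H1. pointwise_in H2.
  assert (E : lmap_eq (lcomp (act XL) (lcomp k h)) (lcomp t2 x)).
  { apply (@act_unit G XL); pointwise.
    - rewrite K1, H1. reflexivity.
    - rewrite K2, H2. reflexivity. }
  pointwise_in E.
  apply (pullback_lift_unique HT); pointwise.
  - rewrite A1, H2. reflexivity.
  - rewrite A2, E. reflexivity.
Qed.

Lemma pullback_act_assoc (W : Frame) (g kk : LMap W (G1 G)) (x : LMap W T)
    (h1 h2 : LMap W At) (h3 : LMap W (G2 G)) (h4 : LMap W At) :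
  lmap_eq (lcomp b1 h1) kk -> lmap_eq (lcomp b2 h1) x ->
  lmap_eq (lcomp b1 h2) g -> lmap_eq (lcomp b2 h2) (lcomp act_t h1) ->
  lmap_eq (lcomp (gp1 G) h3) g -> lmap_eq (lcomp (gp2 G) h3) kk ->
  lmap_eq (lcomp b1 h4) (lcomp (gmul G) h3) -> lmap_eq (lcomp b2 h4) x ->
  lmap_eq (lcomp act_t h2) (lcomp act_t h4).
Proof.
  intros C1 C2 C3 C4 C5 C6 C7 C8.
  pose proof Ha1 as A1. pointwise_in A1. pose proof Ha2 as A2. pointwise_in A2.
  pose proof Hk1 as K1. pointwise_in K1. pose proof Hk2 as K2. pointwise_in K2.
  pointwise_in C1. pointwise_in C2. pointwise_in C3. pointwise_in C4.
  pointwise_in C7. pointwise_in C8.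
  assert (E : lmap_eq (lcomp (act XL) (lcomp k h2)) (lcomp (act XL) (lcomp k h4))).
  { apply (@act_assoc G XL _ g kk (lcomp t2 x) (lcomp k h1) (lcomp k h2) h3 (lcomp k h4));
      try assumption; pointwise.
    - rewrite K1, C1. reflexivity.
    - rewrite K2, C2. reflexivity.
    - rewrite K1, C3. reflexivity.
    - rewrite K2, C4, A2. reflexivity.
    - rewrite K1, C7. reflexivity.
    - rewrite K2, C8. reflexivity. }
  pointwise_in E.
  apply (pullback_lift_unique HT); pointwise.
  - rewrite !A1, C4, A1, C2, C8. reflexivity.
  - rewrite !A2. apply E.
Qed.

Definition pullback_glocale : GLocale G :=
  {| gl_sp := T; anchor := lcomp p t2; adom := At; ap1 := b1; ap2 := b2; adom_pb := HAt;
     act := act_t; anchor_act := pullback_anchor_act; act_unit := pullback_act_unit;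
     act_assoc := pullback_act_assoc |}.

Lemma pullback_pair_iso (P : Frame) (q1 q2 : LMap P T) :
  is_pullback t1 t1 q1 q2 ->
  exists c : LMap At P,
    lmap_eq (lcomp q1 c) act_t /\ lmap_eq (lcomp q2 c) b2 /\ is_iso c.
Proof.
  intro HP.
  pose proof Ha1 as A1. pointwise_in A1. pose proof Ha2 as A2. pointwise_in A2.
  pose proof Hk1 as K1. pointwise_in K1. pose proof Hk2 as K2. pointwise_in K2.
  destruct (pullback_lift HP act_t b2 Ha1) as [c [Hc1 Hc2]].
  destruct (pb_divide X (lcomp t2 q1) (lcomp t2 q2)) as [u [Hu1 Hu2]].
  { pointwise. rewrite <- !(pullback_square HT). apply (pullback_square HP). }
  pointwise_in Hu1. pointwise_in Hu2.
  destruct (pullback_lift HAt (lcomp (ap1 XL) u) q2) as [e [He1 He2]].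
  { pointwise. rewrite (pullback_square (adom_pb XL)), Hu2. reflexivity. }
  exists c. split; [exact Hc1 |]. split; [exact Hc2 |].
  pointwise_in Hc1. pointwise_in Hc2. pointwise_in He1. pointwise_in He2.
  assert (Euc : lmap_eq (lcomp u c) k).
  { apply (pb_divide_unique X); pointwise.
    - rewrite Hu1, Hc1, A2. reflexivity.
    - rewrite Hu2, Hc2, K2. reflexivity. }
  assert (Eke : lmap_eq (lcomp k e) u).
  { apply (pullback_lift_unique (adom_pb XL)); pointwise.
    - rewrite K1, He1. reflexivity.
    - rewrite K2, He2, Hu2. reflexivity. }
  pointwise_in Euc. pointwise_in Eke.
  exists e. split.
  - apply (pullback_lift_unique HAt); pointwise.
    + rewrite He1, Euc, K1. reflexivity.
    + rewrite He2, Hc2. reflexivity.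
  - assert (Eae : lmap_eq (lcomp act_t e) q1).
    { apply (pullback_lift_unique HT); pointwise.
      - rewrite A1, He2. symmetry. apply (pullback_square HP).
      - rewrite A2, Eke, Hu1. reflexivity. }
    pointwise_in Eae.
    apply (pullback_lift_unique HP); pointwise.
    + rewrite Hc1, Eae. reflexivity.
    + rewrite Hc2, He2. reflexivity.
Qed.

Definition pullback_bundle : PrincipalBundle G Mt :=
  {| pb_loc := pullback_glocale; pb_proj := t1; pb_inv := Ha1;
     pb_pair_iso := pullback_pair_iso; pb_open_surj := Hop |}.

Lemma pullback_pr2_equivariant : equivariant (X := pullback_glocale) (Y := XL) t2.
Proof.
  split; [intro y; reflexivity |].
  intros kk H1 H2. simpl in *. pose proof Ha2 as A2. pointwise_in A2.
  assert (E : lmap_eq k kk).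
  { pointwise_in H1. pointwise_in H2. pose proof Hk1 as K1. pointwise_in K1.
    pose proof Hk2 as K2. pointwise_in K2.
    apply (pullback_lift_unique (adom_pb XL)); pointwise.
    - rewrite K1, H1. reflexivity.
    - rewrite K2, H2. reflexivity. }
  pointwise_in E. pointwise. rewrite A2, E. reflexivity.
Qed.

Lemma pullback_lift_equivariant {Y : PrincipalBundle G Mt} {f' : LMap (pb_sp Y) (pb_sp X)}
    {phi : LMap (pb_sp Y) T} :
  equivariant f' ->
  lmap_eq (lcomp t1 phi) (pb_proj Y) -> lmap_eq (lcomp t2 phi) f' ->
  equivariant (X := pb_loc Y) (Y := pullback_glocale) phi.
Proof.
  intros [Hf1 Hf2] Hp1 Hp2.
  pose proof Ha1 as A1. pointwise_in A1. pose proof Ha2 as A2. pointwise_in A2.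
  pose proof Hk1 as K1. pointwise_in K1. pose proof Hk2 as K2. pointwise_in K2.
  pose proof Hp1 as P1. pointwise_in P1. pose proof Hp2 as P2. pointwise_in P2.
  split.
  - pointwise_in Hf1. pointwise. rewrite P2. apply Hf1.
  - intros kk H1 H2. simpl in *. pointwise_in H1. pointwise_in H2.
    assert (E : lmap_eq (lcomp f' (act (pb_loc Y))) (lcomp (act XL) (lcomp k kk))).
    { apply Hf2; pointwise.
      - rewrite K1, H1. reflexivity.
      - rewrite K2, H2, P2. reflexivity. }
    pointwise_in E.
    apply (pullback_lift_unique HT); pointwise.
    + pose proof (pb_inv Y) as I. pointwise_in I. rewrite P1, A1, H2, P1. apply I.
    + rewrite P2, A2. apply E.
Qed.

Lemma pullback_bundle_universal (Y : PrincipalBundle G Mt) (f' : LMap (pb_sp Y) (pb_sp X)) :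
  equivariant f' -> lmap_eq (lcomp pi f') (lcomp f (pb_proj Y)) ->
  exists phi : LMap (pb_sp Y) (pb_sp pullback_bundle),
    (equivariant phi /\ is_iso phi /\
     lmap_eq (lcomp (pb_proj pullback_bundle) phi) (pb_proj Y) /\
     lmap_eq (lcomp t2 phi) f') /\
    forall psi : LMap (pb_sp Y) (pb_sp pullback_bundle),
      equivariant psi -> is_iso psi ->
      lmap_eq (lcomp (pb_proj pullback_bundle) psi) (pb_proj Y) ->
      lmap_eq (lcomp t2 psi) f' ->
      lmap_eq psi phi.
Proof.
  intros Hf' Hsq.
  destruct (pullback_lift HT (pb_proj Y) f') as [phi [Hp1 Hp2]].
  { intro y. symmetry. apply Hsq. }
  pose proof (pullback_lift_equivariant Hf' Hp1 Hp2) as Hphi.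
  exists phi. split.
  - split; [exact Hphi |]. split; [| split; [exact Hp1 | exact Hp2]].
    exact (bundle_map_is_iso _ pullback_bundle _ Hphi Hp1).
  - intros psi _ _ H1 H2. pointwise_in H1. pointwise_in H2.
    pointwise_in Hp1. pointwise_in Hp2.
    apply (pullback_lift_unique HT); pointwise.
    + rewrite H1, Hp1. reflexivity.
    + rewrite H2, Hp2. reflexivity.
Qed.
End PullbackBundle.

Theorem lemma3p2 (G : OpenGroupoid) (M Mt : Frame) (X : PrincipalBundle G M)
    (f : LMap Mt M) :
  exists (Xt : PrincipalBundle G Mt) (ft : LMap (pb_sp Xt) (pb_sp X)),
    equivariant ft /\
    lmap_eq (lcomp (pb_proj X) ft) (lcomp f (pb_proj Xt)) /\
    forall (X' : PrincipalBundle G Mt) (f' : LMap (pb_sp X') (pb_sp X)),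
      equivariant f' ->
      lmap_eq (lcomp (pb_proj X) f') (lcomp f (pb_proj X')) ->
      exists phi : LMap (pb_sp X') (pb_sp Xt),
        (equivariant phi /\ is_iso phi /\
         lmap_eq (lcomp (pb_proj Xt) phi) (pb_proj X') /\
         lmap_eq (lcomp ft phi) f') /\
        forall psi : LMap (pb_sp X') (pb_sp Xt),
          equivariant psi -> is_iso psi ->
          lmap_eq (lcomp (pb_proj Xt) psi) (pb_proj X') ->
          lmap_eq (lcomp ft psi) f' ->
          lmap_eq psi phi.
Proof.
  set (t1 := pullback_pr1 f (pb_proj X)). set (t2 := pullback_pr2 f (pb_proj X)).
  pose proof (pullback_frame_is_pullback f (pb_proj X)) as HT.
  pose proof (pullback_pr1_open_surj f _ (pb_open_surj X)) as Hop.
  set (q := lcomp (anchor (pb_loc X)) t2).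
  pose proof (pullback_frame_is_pullback (gd G) q) as HAt.
  destruct (pullback_lift (adom_pb (pb_loc X)) (pullback_pr1 (gd G) q)
              (lcomp t2 (pullback_pr2 (gd G) q)) (pullback_square HAt)) as [k [Hk1 Hk2]].
  destruct (pullback_lift HT (lcomp t1 (pullback_pr2 (gd G) q)) (lcomp (act (pb_loc X)) k))
    as [act_t [Ha1 Ha2]].
  { pose proof Hk2 as K2. pointwise_in K2. pose proof (pb_inv X) as I. pointwise_in I.
    pointwise. rewrite (pullback_square HT), I, K2. reflexivity. }
  exists (pullback_bundle X f HT Hop HAt Hk1 Hk2 Ha1 Ha2), t2.
  split; [exact (pullback_pr2_equivariant X f HT HAt Hk1 Hk2 Ha1 Ha2) |]. split.
  - intro y. symmetry. apply (pullback_square HT).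
  - exact (pullback_bundle_universal X f HT Hop HAt Hk1 Hk2 Ha1 Ha2).
Qed.
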